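(* Let $R$ be a division ring with center $C$, let $\{I_{a,b}\}_{a,b\in\mathbb{Z}_{\ge0}}\subseteq R$, and let $\{p_k(x)\}_{k\ge0}\subseteq R[x]$, $\{q_k(y)\}_{k\ge0}\subseteq R[y]$ be biorthonormal with respect to $\{I_{a,b}\}$, with $p_k$ and $q_k$ of degree exactly $k$. Suppose there are polynomials $f(x)=\sum_{i=0}^n a_i x^i$ and $g(y)=\sum_{j=0}^m y^j b_j$ with $a_i,b_j\in C$, and elements $\alpha_r,\beta_s\in R$, such that $$\sum_{i=0}^n a_i I_{r+i,s}+\sum_{j=0}^m I_{r,s+j}b_j=\alpha_r\beta_s\quad\text{for all } r,s\ge 0.$$ Writing $p_k(x)=\sum_{i=0}^k c^{(k)}_i x^i$ and $q_k(y)=\sum_{i=0}^k y^i d^{(k)}_i$, set $\pi_k=\sum_{i=0}^k c^{(k)}_i\alpha_i$ and $\eta_k=\sum_{i=0}^k \beta_i d^{(k)}_i$, and assume all $\pi_k,\eta_k$ are nonzero. Then $p_k$ and $q_k$ satisfy $(n+m+2)$-term recurrence relations: for every $k\ge1$ there exist elements $A_{k,i},B_{k,i}\in R$ such that $$\big(\pi_k^{-1}p_k(x)-\pi_{k-1}^{-1}p_{k-1}(x)\big)f(x)=\sum_{i=k-1-m}^{k+n}A_{k,i}\,p_i(x),$$ $$g(y)\big(q_k(y)\eta_k^{-1}-q_{k-1}(y)\eta_{k-1}^{-1}\big)=\sum_{i=k-1-n}^{k+m}q_i(y)\,B_{k,i},$$ where terms with negative index are omitted.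
   Context: Elements of $R[x]$ are written $\sum_i a_i x^i$ and elements of $R[y]$ as $\sum_j y^j b_j$; $x$ and $y$ commute with elements of $C$. The pairing $\langle\cdot,\cdot\rangle:R[x]\times R[y]\to R$ determined by the bimoments is $\langle \sum_i a_i x^i,\sum_j y^j b_j\rangle=\sum_{i,j}a_iI_{i,j}b_j$. The sequences are biorthonormal if $\langle p_k,q_l\rangle=0$ for $k\neq l$ and $\langle p_k,q_k\rangle=1$ for all $k$. *)

From HB Require Import structures.
From mathcomp Require Import all_boot all_order all_algebra.
Set Implicit Arguments. Unset Strict Implicit. Unset Printing Implicit Defensive.
Import GRing.Theory.
Local Open Scope ring_scope.

Definition division_ring (R : unitRingType) : Prop :=
  forall x : R, x != 0 -> x \is a GRing.unit.

Definition central (R : unitRingType) (c : R) : Prop :=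
  forall z : R, c * z = z * c.

(* R[x] and R[y] are both modelled by {poly R}; the variable commutes with R.
   Pairing <sum a_i x^i, sum y^j b_j> = sum_{i,j} a_i I_{i,j} b_j. *)
Definition bipairing (R : unitRingType) (I : nat -> nat -> R)
  (p q : {poly R}) : R :=
  \sum_(i < size p) \sum_(j < size q) p`_i * I i j * q`_j.

Definition biorthonormal (R : unitRingType) (I : nat -> nat -> R)
  (p q : nat -> {poly R}) : Prop :=
  forall k l : nat, bipairing I (p k) (q l) = (k == l)%:R.

From HB Require Import structures.
From mathcomp Require Import all_boot all_order all_algebra.
From mathcomp Require Import zify.
Import GRing.Theory.
Local Open Scope ring_scope.
Set Implicit Arguments. Unset Strict Implicit. Unset Printing Implicit Defensive.

(* Writing L = lmoment alpha and M = rmoment beta, the moment relation reads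
   <P f, Q> + <P, g Q> = L P * M Q.  The normalisation by [pi] makes
   P = pi_k^-1 p_k - pi_(k-1)^-1 p_(k-1) satisfy L P = 0, hence
   <P f, q_j> = - <P, g q_j>, and this vanishes by biorthogonality once
   deg (g q_j) < k - 1, i.e. j < k - 1 - m.  Since the coefficients of P f in
   the basis (p_i) are read off by pairing with the q_i, only the indices
   k - 1 - m <= i <= k + n survive.  The same argument on the right gives the
   recurrence for the q_k. *)

Lemma sum_coef_widen (R : nzSemiRingType) (V : nmodType) (P : {poly R}) N
    (F : nat -> R -> V) :
  (forall r, F r 0 = 0) -> (size P <= N)%N ->
  \sum_(r < N) F r P`_r = \sum_(r < size P) F r P`_r.
Proof.
move=> F0 hN; rewrite -(subnKC hN) big_split_ord /=.
rewrite [X in _ + X]big1 ?addr0 // => i _.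
by rewrite nth_default ?F0 // leq_addr.
Qed.

Lemma big_ord_drop_zeros (V : nmodType) N l (F : nat -> V) :
  (forall i : 'I_N, (i < l)%N -> F i = 0) ->
  \sum_(i < N) F i = \sum_(l <= i < N) F i.
Proof.
move=> F0; rewrite -(big_mkord xpredT); case: (leqP l N) => hl.
  rewrite (big_cat_nat (leq0n l) hl) /= big_nat_cond big1 ?add0r //.
  move=> i /andP[/andP[_ hi] _].
  exact: (F0 (Ordinal (leq_trans hi hl))).
rewrite [RHS]big_geq ?(ltnW hl) // big_nat_cond big1 // => i /andP[/andP[_ hi] _].
exact: (F0 (Ordinal hi) (ltn_trans hi hl)).
Qed.

Lemma size_mulC_leq (R : nzSemiRingType) (Q : {poly R}) c :
  (size (Q * c%:P)%R <= size Q)%N.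
Proof. by apply/leq_sizeP => j hj; rewrite coefMC nth_default // mul0r. Qed.

Lemma size_polyB_leq (R : nzRingType) (P P' : {poly R}) :
  (size (P - P')%R <= maxn (size P) (size P'))%N.
Proof. by rewrite -(size_polyN P') size_polyD. Qed.

Lemma polyC_central (R : unitRingType) (c : R) (Z : {poly R}) :
  central c -> c%:P * Z = Z * c%:P.
Proof. by move=> hc; apply/polyP => t; rewrite coefCM coefMC hc. Qed.

Section Pairing.
Variables (R : unitRingType) (I : nat -> nat -> R).

Lemma bipairing_widen (P Q : {poly R}) N M :
  (size P <= N)%N -> (size Q <= M)%N ->
  bipairing I P Q = \sum_(i < N) \sum_(j < M) P`_i * I i j * Q`_j.
Proof.
move=> hN hM; rewrite /bipairing.
rewrite (@sum_coef_widen _ _ P N (fun i x => \sum_(j < M) x * I i j * Q`_j)) //.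
  apply: eq_bigr => i _.
  rewrite (@sum_coef_widen _ _ Q M (fun j x => P`_i * I i j * x)) //.
  by move=> r; rewrite mulr0.
by move=> r; rewrite big1 // => j _; rewrite !mul0r.
Qed.

Lemma bipairing0l (Q : {poly R}) : bipairing I 0 Q = 0.
Proof. by rewrite /bipairing size_poly0 big_ord0. Qed.

Lemma bipairing0r (P : {poly R}) : bipairing I P 0 = 0.
Proof. by rewrite /bipairing size_poly0; apply: big1 => i _; rewrite big_ord0. Qed.

Lemma bipairingDl (P P' Q : {poly R}) :
  bipairing I (P + P') Q = bipairing I P Q + bipairing I P' Q.
Proof.
have hsz := size_polyD P P'.
rewrite (bipairing_widen (leq_maxl (size P) (size P')) (leqnn (size Q))).
rewrite (bipairing_widen (leq_maxr (size P) (size P')) (leqnn (size Q))).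
rewrite (bipairing_widen hsz (leqnn (size Q))) -big_split; apply: eq_bigr => i _.
by rewrite -big_split; apply: eq_bigr => j _; rewrite coefD !mulrDl.
Qed.

Lemma bipairingDr (P Q Q' : {poly R}) :
  bipairing I P (Q + Q') = bipairing I P Q + bipairing I P Q'.
Proof.
have hsz := size_polyD Q Q'.
rewrite (bipairing_widen (leqnn (size P)) (leq_maxl (size Q) (size Q'))).
rewrite (bipairing_widen (leqnn (size P)) (leq_maxr (size Q) (size Q'))).
rewrite (bipairing_widen (leqnn (size P)) hsz) -big_split; apply: eq_bigr => i _.
by rewrite -big_split; apply: eq_bigr => j _; rewrite coefD !mulrDr.
Qed.

Lemma bipairingZl c (P Q : {poly R}) :
  bipairing I (c *: P) Q = c * bipairing I P Q.
Proof.
rewrite (bipairing_widen (size_scale_leq c P) (leqnn (size Q))) mulr_sumr.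
apply: eq_bigr => i _; rewrite mulr_sumr; apply: eq_bigr => j _.
by rewrite coefZ !mulrA.
Qed.

Lemma bipairingMCr c (P Q : {poly R}) :
  bipairing I P (Q * c%:P) = bipairing I P Q * c.
Proof.
rewrite (bipairing_widen (leqnn (size P)) (size_mulC_leq Q c)) mulr_suml.
apply: eq_bigr => i _; rewrite mulr_suml; apply: eq_bigr => j _.
by rewrite coefMC !mulrA.
Qed.

Lemma bipairingNl (P Q : {poly R}) : bipairing I (- P) Q = - bipairing I P Q.
Proof. by rewrite -scaleN1r bipairingZl mulN1r. Qed.

Lemma bipairingNr (P Q : {poly R}) : bipairing I P (- Q) = - bipairing I P Q.
Proof. by rewrite -mulrN1 -polyCN bipairingMCr mulrN1. Qed.

Lemma bipairing_suml (Q : {poly R}) (T : Type) (r : seq T) (Pr : pred T)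
    (F : T -> {poly R}) :
  bipairing I (\sum_(i <- r | Pr i) F i) Q = \sum_(i <- r | Pr i) bipairing I (F i) Q.
Proof.
exact: (big_morph (bipairing I ^~ Q) (fun x y => bipairingDl x y Q) (bipairing0l Q)).
Qed.

Lemma bipairing_sumr (P : {poly R}) (T : Type) (r : seq T) (Pr : pred T)
    (F : T -> {poly R}) :
  bipairing I P (\sum_(i <- r | Pr i) F i) = \sum_(i <- r | Pr i) bipairing I P (F i).
Proof. exact: (big_morph (bipairing I P) (bipairingDr P) (bipairing0r P)). Qed.

Lemma bipairing_mulXn (P Q : {poly R}) i :
  bipairing I (P * 'X^i) Q =
  \sum_(r < size P) \sum_(s < size Q) P`_r * I (r + i)%N s * Q`_s.
Proof.
have hsz : (size (P * 'X^i)%R <= i + size P)%N.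
  apply/leq_sizeP => j hj; rewrite coefMXn; case: ifP => // /negbT.
  by rewrite -leqNgt => hij; rewrite nth_default // -(leq_add2l i) subnKC.
rewrite (bipairing_widen hsz (leqnn _)) big_split_ord /= big1 ?add0r.
  apply: eq_bigr => r _; apply: eq_bigr => s _.
  by rewrite coefMXn ltnNge leq_addr /= addKn addnC.
by move=> r _; apply: big1 => s _; rewrite coefMXn ltn_ord !mul0r.
Qed.

Lemma bipairing_Xnmul (P Q : {poly R}) j :
  bipairing I P ('X^j * Q) =
  \sum_(r < size P) \sum_(s < size Q) P`_r * I r (s + j)%N * Q`_s.
Proof.
have hsz : (size ('X^j * Q)%R <= j + size Q)%N.
  apply/leq_sizeP => t ht; rewrite coefXnM; case: ifP => // /negbT.
  by rewrite -leqNgt => hij; rewrite nth_default // -(leq_add2l j) subnKC.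
rewrite (bipairing_widen (leqnn _) hsz); apply: eq_bigr => r _.
rewrite big_split_ord /= big1 ?add0r.
  by apply: eq_bigr => s _; rewrite coefXnM ltnNge leq_addr /= addKn addnC.
by move=> s _; rewrite coefXnM ltn_ord !mulr0.
Qed.

End Pairing.

Section Moments.
Variables (R : nzRingType) (alpha beta : nat -> R).

Definition lmoment (P : {poly R}) : R := \sum_(i < size P) P`_i * alpha i.
Definition rmoment (Q : {poly R}) : R := \sum_(i < size Q) beta i * Q`_i.

Lemma lmoment_widen (P : {poly R}) N :
  (size P <= N)%N -> lmoment P = \sum_(i < N) P`_i * alpha i.
Proof.
move=> hN; rewrite (@sum_coef_widen _ _ P N (fun i x => x * alpha i)) //.
by move=> i; rewrite mul0r.
Qed.

Lemma rmoment_widen (Q : {poly R}) N :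
  (size Q <= N)%N -> rmoment Q = \sum_(i < N) beta i * Q`_i.
Proof.
move=> hN; rewrite (@sum_coef_widen _ _ Q N (fun i x => beta i * x)) //.
by move=> i; rewrite mulr0.
Qed.

Lemma lmomentB (P P' : {poly R}) : lmoment (P - P') = lmoment P - lmoment P'.
Proof.
rewrite (lmoment_widen (leq_maxl (size P) (size P'))).
rewrite (lmoment_widen (leq_maxr (size P) (size P'))).
rewrite (lmoment_widen (size_polyB_leq P P')) -sumrB.
by apply: eq_bigr => i _; rewrite coefB mulrBl.
Qed.

Lemma rmomentB (Q Q' : {poly R}) : rmoment (Q - Q') = rmoment Q - rmoment Q'.
Proof.
rewrite (rmoment_widen (leq_maxl (size Q) (size Q'))).
rewrite (rmoment_widen (leq_maxr (size Q) (size Q'))).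
rewrite (rmoment_widen (size_polyB_leq Q Q')) -sumrB.
by apply: eq_bigr => i _; rewrite coefB mulrBr.
Qed.

Lemma lmomentZ c (P : {poly R}) : lmoment (c *: P) = c * lmoment P.
Proof.
rewrite (lmoment_widen (size_scale_leq c P)) /lmoment mulr_sumr.
by apply: eq_bigr => i _; rewrite coefZ mulrA.
Qed.

Lemma rmomentMC c (Q : {poly R}) : rmoment (Q * c%:P) = rmoment Q * c.
Proof.
rewrite (rmoment_widen (size_mulC_leq Q c)) /rmoment mulr_suml.
by apply: eq_bigr => i _; rewrite coefMC mulrA.
Qed.

End Moments.

Section MomentIdentity.
Variables (R : unitRingType) (I : nat -> nat -> R) (n m : nat).
Variables (a b alpha beta : nat -> R).
Hypothesis a_central : forall i, central (a i).
Hypothesis b_central : forall j, central (b j).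
Hypothesis moment_eq : forall r s : nat,
  \sum_(i < n.+1) a i * I (r + i)%N s + \sum_(j < m.+1) I r (s + j)%N * b j
  = alpha r * beta s.

Lemma bipairing_mul_polyl (P Q : {poly R}) :
  bipairing I (P * \poly_(i < n.+1) a i) Q =
  \sum_(r < size P) \sum_(s < size Q)
    P`_r * (\sum_(i < n.+1) a i * I (r + i)%N s) * Q`_s.
Proof.
have -> : P * \poly_(i < n.+1) a i = \sum_(i < n.+1) a i *: (P * 'X^i).
  rewrite poly_def mulr_sumr; apply: eq_bigr => i _.
  by rewrite -mul_polyC mulrA -polyC_central // mul_polyC scalerAl.
rewrite bipairing_suml.
under eq_bigr do rewrite bipairingZl bipairing_mulXn.
transitivity (\sum_(i < n.+1) \sum_(r < size P) \sum_(s < size Q)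
                P`_r * (a i * I (r + i)%N s) * Q`_s).
  apply: eq_bigr => i _; rewrite mulr_sumr; apply: eq_bigr => r _.
  by rewrite mulr_sumr; apply: eq_bigr => s _; rewrite !mulrA a_central.
rewrite exchange_big; apply: eq_bigr => r _; rewrite exchange_big.
by apply: eq_bigr => s _; rewrite mulr_sumr mulr_suml.
Qed.

Lemma bipairing_mul_polyr (P Q : {poly R}) :
  bipairing I P (\poly_(j < m.+1) b j * Q) =
  \sum_(r < size P) \sum_(s < size Q)
    P`_r * (\sum_(j < m.+1) I r (s + j)%N * b j) * Q`_s.
Proof.
have -> : \poly_(j < m.+1) b j * Q = \sum_(j < m.+1) ('X^j * Q) * (b j)%:P.
  rewrite poly_def mulr_suml; apply: eq_bigr => j _.
  by rewrite -mul_polyC -mulrA polyC_central.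
rewrite bipairing_sumr.
under eq_bigr do rewrite bipairingMCr bipairing_Xnmul.
transitivity (\sum_(j < m.+1) \sum_(r < size P) \sum_(s < size Q)
                P`_r * (I r (s + j)%N * b j) * Q`_s).
  apply: eq_bigr => j _; rewrite mulr_suml; apply: eq_bigr => r _.
  by rewrite mulr_suml; apply: eq_bigr => s _; rewrite -!mulrA b_central.
rewrite exchange_big; apply: eq_bigr => r _; rewrite exchange_big.
by apply: eq_bigr => s _; rewrite mulr_sumr mulr_suml.
Qed.

Lemma bipairing_moment (P Q : {poly R}) :
  bipairing I (P * \poly_(i < n.+1) a i) Q + bipairing I P (\poly_(j < m.+1) b j * Q)
  = lmoment alpha P * rmoment beta Q.
Proof.
rewrite bipairing_mul_polyl bipairing_mul_polyr -big_split /lmoment mulr_suml.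
apply: eq_bigr => r _; rewrite -big_split mulr_sumr; apply: eq_bigr => s _.
by rewrite /= -mulrDl -mulrDr moment_eq !mulrA.
Qed.

End MomentIdentity.

Section Expansions.
Variables (R : unitRingType) (I : nat -> nat -> R) (p q : nat -> {poly R}).
Hypothesis R_division : division_ring R.
Hypothesis size_p : forall k, size (p k) = k.+1.
Hypothesis size_q : forall k, size (q k) = k.+1.

Lemma exists_lexpansion N (F : {poly R}) :
  (size F <= N)%N -> exists A : nat -> R, F = \sum_(i < N) A i *: p i.
Proof.
elim: N F => [|N IH] F hF.
  by exists (fun=> 0); rewrite big_ord0; apply/eqP; rewrite -size_poly_eq0 -leqn0.
have lc_unit : lead_coef (p N) \is a GRing.unit.
  by apply: R_division; rewrite lead_coef_eq0 -size_poly_eq0 size_p.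
have lc_coef : (p N)`_N = lead_coef (p N) by rewrite lead_coefE size_p.
set c := F`_N / lead_coef (p N).
have hF' : (size (F - c *: p N)%R <= N)%N.
  apply/leq_sizeP => j; rewrite leq_eqVlt => /orP[/eqP <- | hj].
    by rewrite coefB coefZ lc_coef divrK // subrr.
  by rewrite coefB coefZ !nth_default ?size_p ?mulr0 ?subr0 // (leq_trans hF hj).
have [A' EA'] := IH _ hF'.
exists (fun i => if i == N then c else A' i).
rewrite big_ord_recr /= eqxx -[F](subrK (c *: p N)) EA'.
by congr (_ + _); apply: eq_bigr => i _; rewrite (ltn_eqF (ltn_ord i)).
Qed.

Lemma exists_rexpansion N (G : {poly R}) :
  (size G <= N)%N -> exists B : nat -> R, G = \sum_(i < N) q i * (B i)%:P.
Proof.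
elim: N G => [|N IH] G hG.
  by exists (fun=> 0); rewrite big_ord0; apply/eqP; rewrite -size_poly_eq0 -leqn0.
have lc_unit : lead_coef (q N) \is a GRing.unit.
  by apply: R_division; rewrite lead_coef_eq0 -size_poly_eq0 size_q.
have lc_coef : (q N)`_N = lead_coef (q N) by rewrite lead_coefE size_q.
set c := (lead_coef (q N))^-1 * G`_N.
have hG' : (size (G - q N * c%:P)%R <= N)%N.
  apply/leq_sizeP => j; rewrite leq_eqVlt => /orP[/eqP <- | hj].
    by rewrite coefB coefMC lc_coef mulrA divrr // mul1r subrr.
  by rewrite coefB coefMC !nth_default ?size_q ?mul0r ?subr0 // (leq_trans hG hj).
have [B' EB'] := IH _ hG'.
exists (fun i => if i == N then c else B' i).
rewrite big_ord_recr /= eqxx -[G](subrK (q N * c%:P)) EB'.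
by congr (_ + _); apply: eq_bigr => i _; rewrite (ltn_eqF (ltn_ord i)).
Qed.

Hypothesis pq_biorth : biorthonormal I p q.

Lemma bipairing_lexpansion (A : nat -> R) N j : (j < N)%N ->
  bipairing I (\sum_(i < N) A i *: p i) (q j) = A j.
Proof.
move=> hj; rewrite bipairing_suml (bigD1 (Ordinal hj)) //= bipairingZl pq_biorth.
rewrite eqxx mulr1 big1 ?addr0 // => i hi.
by rewrite bipairingZl pq_biorth (negbTE (hi : (i : nat) != j)) mulr0.
Qed.

Lemma bipairing_rexpansion (B : nat -> R) N j : (j < N)%N ->
  bipairing I (p j) (\sum_(i < N) q i * (B i)%:P) = B j.
Proof.
move=> hj; rewrite bipairing_sumr (bigD1 (Ordinal hj)) //= bipairingMCr pq_biorth.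
rewrite eqxx mul1r big1 ?addr0 // => i hi.
by rewrite bipairingMCr pq_biorth eq_sym (negbTE (hi : (i : nat) != j)) mul0r.
Qed.

Lemma bipairing_orthl k (Q : {poly R}) :
  (size Q <= k)%N -> bipairing I (p k) Q = 0.
Proof.
move=> hQ; have [B ->] := exists_rexpansion hQ.
rewrite bipairing_sumr big1 // => i _.
by rewrite bipairingMCr pq_biorth (gtn_eqF (ltn_ord i)) mul0r.
Qed.

Lemma bipairing_orthr k (P : {poly R}) :
  (size P <= k)%N -> bipairing I P (q k) = 0.
Proof.
move=> hP; have [A ->] := exists_lexpansion hP.
rewrite bipairing_suml big1 // => i _.
by rewrite bipairingZl pq_biorth (ltn_eqF (ltn_ord i)) mulr0.
Qed.

End Expansions.

Section Recurrence.
Variables (R : unitRingType) (I : nat -> nat -> R) (p q : nat -> {poly R}).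
Variables (n m : nat) (a b alpha beta : nat -> R).
Hypothesis R_division : division_ring R.
Hypothesis pq_biorth : biorthonormal I p q.
Hypothesis size_p : forall k, size (p k) = k.+1.
Hypothesis size_q : forall k, size (q k) = k.+1.
Hypothesis a_central : forall i, central (a i).
Hypothesis b_central : forall j, central (b j).
Hypothesis moment_eq : forall r s : nat,
  \sum_(i < n.+1) a i * I (r + i)%N s + \sum_(j < m.+1) I r (s + j)%N * b j
  = alpha r * beta s.

Lemma exists_band_lexpansion (P : {poly R}) d s :
  (forall Q : {poly R}, (size Q <= d)%N -> bipairing I P Q = 0) ->
  lmoment alpha P = 0 -> (size P <= s.+1)%N ->
  exists A : nat -> R,
    P * \poly_(i < n.+1) a i = \sum_(d - m <= i < s + n + 1) A i *: p i.
Proof.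
move=> P_orth P_moment hP.
have hPf : (size (P * \poly_(i < n.+1) a i)%R <= s + n + 1)%N.
  apply: leq_trans (size_polyMleq _ _) _.
  have := leq_add hP (size_poly n.+1 a); lia.
have [A EA] := exists_lexpansion R_division size_p hPf.
exists A; rewrite EA; apply: big_ord_drop_zeros => j hj.
suff -> : A j = 0 by rewrite scale0r.
rewrite -(bipairing_lexpansion pq_biorth A (ltn_ord j)) -EA.
have /eqP := bipairing_moment a_central b_central moment_eq P (q j).
rewrite P_moment mul0r addr_eq0 => /eqP ->.
rewrite P_orth ?oppr0 //; apply: leq_trans (size_polyMleq _ _) _.
rewrite size_q; have := size_poly m.+1 b; lia.
Qed.

Lemma exists_band_rexpansion (Q : {poly R}) d s :
  (forall P : {poly R}, (size P <= d)%N -> bipairing I P Q = 0) ->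
  rmoment beta Q = 0 -> (size Q <= s.+1)%N ->
  exists B : nat -> R,
    \poly_(j < m.+1) b j * Q = \sum_(d - n <= i < s + m + 1) q i * (B i)%:P.
Proof.
move=> Q_orth Q_moment hQ.
have hgQ : (size (\poly_(j < m.+1) b j * Q)%R <= s + m + 1)%N.
  apply: leq_trans (size_polyMleq _ _) _.
  have := leq_add (size_poly m.+1 b) hQ; lia.
have [B EB] := exists_rexpansion R_division size_q hgQ.
exists B; rewrite EB; apply: big_ord_drop_zeros => j hj.
suff -> : B j = 0 by rewrite mulr0.
rewrite -(bipairing_rexpansion pq_biorth B (ltn_ord j)) -EB.
have /eqP := bipairing_moment a_central b_central moment_eq (p j) Q.
rewrite Q_moment mulr0 addrC addr_eq0 => /eqP ->.
rewrite Q_orth ?oppr0 //; apply: leq_trans (size_polyMleq _ _) _.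
rewrite size_p; have := size_poly n.+1 a; lia.
Qed.

End Recurrence.

Theorem mainTheorem3 (R : unitRingType) (I : nat -> nat -> R)
  (p q : nat -> {poly R}) (n m : nat) (a b : nat -> R) (alpha beta : nat -> R) :
  division_ring R ->
  biorthonormal I p q ->
  (forall k, size (p k) = k.+1) ->
  (forall k, size (q k) = k.+1) ->
  (forall i, central (a i)) ->
  (forall j, central (b j)) ->
  (forall r s : nat,
     \sum_(i < n.+1) a i * I (r + i)%N s + \sum_(j < m.+1) I r (s + j)%N * b j
     = alpha r * beta s) ->
  let f : {poly R} := \poly_(i < n.+1) a i in
  let g : {poly R} := \poly_(j < m.+1) b j in
  let pi := fun k : nat => \sum_(i < k.+1) (p k)`_i * alpha i in
  let eta := fun k : nat => \sum_(i < k.+1) beta i * (q k)`_i in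
  (forall k, pi k != 0) ->
  (forall k, eta k != 0) ->
  forall k : nat, (1 <= k)%N ->
  exists A B : nat -> R,
    ((pi k)^-1 *: p k - (pi k.-1)^-1 *: p k.-1) * f
      = \sum_(k.-1 - m <= i < k + n + 1) A i *: p i
    /\
    g * (q k * (eta k)^-1%:P - q k.-1 * (eta k.-1)^-1%:P)
      = \sum_(k.-1 - n <= i < k + m + 1) q i * (B i)%:P.
Proof.
move=> hdiv hbi hp hq ha hb hI f g pi eta hpi heta k hk.
have pi_lmoment j : pi j = lmoment alpha (p j) by rewrite /lmoment hp.
have eta_rmoment j : eta j = rmoment beta (q j) by rewrite /rmoment hq.
set P := (pi k)^-1 *: p k - (pi k.-1)^-1 *: p k.-1.
set Q := q k * (eta k)^-1%:P - q k.-1 * (eta k.-1)^-1%:P.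
have P_orth (Q' : {poly R}) : (size Q' <= k.-1)%N -> bipairing I P Q' = 0.
  move=> hQ'; rewrite bipairingDl bipairingNl !bipairingZl.
  by rewrite !(bipairing_orthl hdiv hq hbi) ?mulr0 ?oppr0 ?addr0 //; lia.
have Q_orth (P' : {poly R}) : (size P' <= k.-1)%N -> bipairing I P' Q = 0.
  move=> hP'; rewrite bipairingDr bipairingNr !bipairingMCr.
  by rewrite !(bipairing_orthr hdiv hp hbi) ?mul0r ?oppr0 ?addr0 //; lia.
have P_moment : lmoment alpha P = 0.
  by rewrite lmomentB !lmomentZ -!pi_lmoment !mulVr ?subrr //; apply: hdiv.
have Q_moment : rmoment beta Q = 0.
  by rewrite rmomentB !rmomentMC -!eta_rmoment !divrr ?subrr //; apply: hdiv.
have P_size : (size P <= k.+1)%N.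
  apply: leq_trans (size_polyB_leq _ _) _.
  by rewrite geq_max !(leq_trans (size_scale_leq _ _)) ?hp //; lia.
have Q_size : (size Q <= k.+1)%N.
  apply: leq_trans (size_polyB_leq _ _) _.
  by rewrite geq_max !(leq_trans (size_mulC_leq _ _)) ?hq //; lia.
have [A EA] := exists_band_lexpansion hdiv hbi hp hq ha hb hI P_orth P_moment P_size.
have [B EB] := exists_band_rexpansion hdiv hbi hp hq ha hb hI Q_orth Q_moment Q_size.
by exists A, B.
Qed.
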